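(* Let $R=(V,E_R,w)$ be a connected weighted graph on a vertex set $V$ with $|V|=n\ge 3$ and edge weights in $[0,B]$. Then $$\frac{\mathrm{RS}_f(R)}{\mathrm{GS}_f}=\frac{\max_{S\subset V:\ \exists u\in S,\,v\in V\setminus S,\ \{u,v\}\notin E_R} w_1(S)}{B},$$ where $w_1(S)$ is the minimum weight among edges of $E_R$ crossing the cut $(S,V\setminus S)$.
   Context: For a weighted graph $G$, $f(G)$ denotes the total weight of a minimum spanning tree of $G$. Two graphs on the same vertex set $V$ are edge-weight adjacent if one is obtained from the other by adding one edge $e\in\binom{V}{2}$ not already present, with a weight in $[0,B]$. The global sensitivity $\mathrm{GS}_f$ is the maximum of $|f(G)-f(G')|$ over all pairs of edge-weight adjacent connected graphs on $n$ vertices with edge weights in $[0,B]$. The retain sensitivity is $\mathrm{RS}_f(R)=\max|f((V,E_R))-f((V,E_R\cup\{e\}))|$, the maximum over edges $e\in\binom{V}{2}\setminus E_R$ and over weights $w(e)\in[0,B]$. *)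

From HB Require Import structures.
From mathcomp Require Import all_boot all_order all_algebra.
From mathcomp Require Import classical_sets reals.
Set Implicit Arguments. Unset Strict Implicit. Unset Printing Implicit Defensive.
Import Order.TTheory GRing.Theory Num.Theory.
Local Open Scope ring_scope.
Local Open Scope classical_set_scope.

Section Graphs.
Variables (V : finType) (R : realType).

Definition rmin (x y : R) : R := Num.min x y.
Definition rmax (x y : R) : R := Num.max x y.

Definition is_graph (E : {set {set V}}) : bool := [forall e in E, #|e| == 2%N].

Definition adj (E : {set {set V}}) : rel V :=
  fun x y => (x != y) && ([set x; y]%SET \in E).

Definition gconnected (E : {set {set V}}) : bool :=
  [forall x, forall y, connect (adj E) x y].

(* T is a spanning tree of (V,E): a subgraph of E spanning V which is connected
   and acyclic (= minimally connected: removing any edge disconnects it). *)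
Definition spanning_tree (E T : {set {set V}}) : bool :=
  [&& T \subset E, gconnected T & [forall e in T, ~~ gconnected (T :\ e)]].

(* f(G): total weight of a minimum spanning tree of (V, E, w).
   (The default value \sum_(e in E) w e is an upper bound of every spanning
   tree weight when weights are nonnegative, so it is never selected.) *)
Definition mst (E : {set {set V}}) (w : {set V} -> R) : R :=
  \big[rmin/(\sum_(e in E) w e)]_(T : {set {set V}} | spanning_tree E T)
     \sum_(e in T) w e.

Definition weights_in (B : R) (E : {set {set V}}) (w : {set V} -> R) : Prop :=
  forall e, e \in E -> 0 <= w e <= B.

Definition upd (w : {set V} -> R) (e : {set V}) (t : R) : {set V} -> R :=
  fun x => if x == e then t else w x.

Definition GS (B : R) : R :=
  sup [set d : R | exists (E : {set {set V}}) (w : {set V} -> R) (e : {set V}) (t : R),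
        [/\ is_graph E, gconnected E & weights_in B E w] /\
        [/\ #|e| = 2%N, e \notin E, 0 <= t <= B & gconnected (e |: E)] /\
        d = `|mst E w - mst (e |: E) (upd w e t)|].

Definition RS (B : R) (E : {set {set V}}) (w : {set V} -> R) : R :=
  sup [set d : R | exists (e : {set V}) (t : R),
        [/\ #|e| = 2%N, e \notin E & 0 <= t <= B] /\
        d = `|mst E w - mst (e |: E) (upd w e t)|].

Definition crosses (S e : {set V}) : bool := #|e :&: S| == 1%N.

(* w_1(S): minimum weight of an edge of E crossing the cut (S, V \ S).
   (The default B is only used when no edge crosses, which cannot happen
   for a connected graph and a nontrivial cut.) *)
Definition w1 (B : R) (E : {set {set V}}) (w : {set V} -> R) (S : {set V}) : R :=
  \big[rmin/B]_(e in E | crosses S e) w e.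

Definition cut_has_nonedge (E : {set {set V}}) (S : {set V}) : bool :=
  [exists u in S, exists v in ~: S, [set u; v]%SET \notin E].

Definition max_w1 (B : R) (E : {set {set V}}) (w : {set V} -> R) : R :=
  \big[rmax/0]_(S : {set V} | cut_has_nonedge E S) w1 B E w S.

End Graphs.

(* Adding an edge e = {u, v} of weight t never increases the MST weight. If a
   new MST T uses e, then T \ e splits into the component K of u and the rest;
   the cut (K, V \ K) is crossed by the non-edge e, and swapping e for any old
   edge across it gives a spanning tree of the old graph, so the drop is at most
   w_1(K). Conversely, for a cut S crossed by a non-edge {u, v}, adding {u, v}
   with weight 0 allows removing the edge where the u-v path of an old MST
   leaves S, so the drop is at least w_1(S). Hence RS = max_S w_1(S) <= B, and
   GS = B is attained on a star with all weights B, cut around one leaf. *)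

From HB Require Import structures.
From mathcomp Require Import all_boot all_order all_algebra.
From mathcomp Require Import classical_sets reals.
From mathcomp Require Import fintype finset.
Import Order.TTheory GRing.Theory Num.Theory.
Local Open Scope ring_scope.
Set Implicit Arguments. Unset Strict Implicit. Unset Printing Implicit Defensive.

Section Connectivity.
Variable V : finType.
Implicit Types (E F T : {set {set V}}) (S f : {set V}) (p q u v x y z : V).

Lemma adj_sym E : symmetric (adj E).
Proof. by move=> x y; rewrite /adj eq_sym setUC. Qed.

Lemma connect_adj_sym E : connect_sym (adj E).
Proof. exact/sym_connect_sym/adj_sym. Qed.

Lemma adj_setU1 E x y : x != y -> adj ([set x; y] |: E) x y.
Proof. by move=> xy; rewrite /adj xy setU11. Qed.

Lemma connect_adjS E F x y :
  E \subset F -> connect (adj E) x y -> connect (adj F) x y.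
Proof.
move=> sEF; apply: connect_sub => a b /andP[ab abE]; apply: connect1.
by rewrite /adj ab (subsetP sEF).
Qed.

Lemma gconnectedP E : reflect (forall x y, connect (adj E) x y) (gconnected E).
Proof.
apply: (iffP forallP) => [cE x y | cE x]; first exact: (forallP (cE x)).
exact/forallP/cE.
Qed.

Lemma gconnected_from E u : (forall x, connect (adj E) u x) -> gconnected E.
Proof.
move=> cE; apply/gconnectedP => x y.
by apply: connect_trans (cE y); rewrite connect_adj_sym.
Qed.

Lemma gconnectedS E F : E \subset F -> gconnected E -> gconnected F.
Proof.
by move=> sEF /gconnectedP cE; apply/gconnectedP => x y; apply: connect_adjS (cE x y).
Qed.

Lemma connect_setD_edge T y z x : connect (adj T) y x ->
  connect (adj (T :\ [set y; z])) y x || connect (adj (T :\ [set y; z])) z x.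
Proof.
set Tf := T :\ [set y; z].
pose reach := [pred a | connect (adj Tf) y a || connect (adj Tf) z a].
have closed_reach : closed (adj T) reach.
  move=> p q /andP[pq pqT].
  have [pqf | pqf] := eqVneq [set p; q] [set y; z].
    have reach_yz a : a \in [set y; z] -> a \in reach.
      by case/set2P=> ->; rewrite inE /= connect0 ?orbT.
    by rewrite !reach_yz // -pqf (set21, set22).
  have pqTf : adj Tf p q by rewrite /adj pq !inE pqf.
  have cl := connect_closed (connect_adj_sym Tf).
  by move: (cl y _ _ pqTf) (cl z _ _ pqTf); rewrite !inE /= => -> ->.
by move/(closed_connect closed_reach); rewrite !inE /= connect0 => <-.
Qed.

Lemma gconnected_exchange T y z (g : {set V}) : gconnected T ->
  connect (adj (g |: (T :\ [set y; z]))) y z -> gconnected (g |: (T :\ [set y; z])).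
Proof.
move=> /gconnectedP cT yz; apply: (gconnected_from (u := y)) => x.
have sub := subsetU1 g (T :\ [set y; z]).
case/orP: (connect_setD_edge z (cT y x)) => [yx | zx]; first exact: connect_adjS yx.
exact: connect_trans yz (connect_adjS sub zx).
Qed.

Lemma path_setD T (g : {set V}) x a (p : seq V) :
  path (adj T) a p -> x \notin a :: p -> x \in g -> path (adj (T :\ g)) a p.
Proof.
elim: p a => [|b p IHp] a //= /andP[/andP[ab abT] pth].
rewrite !inE negb_or => /andP[xa xbp] xg.
rewrite IHp // andbT /adj ab !inE abT andbT.
apply: contraNneq xbp => abg; move: xg; rewrite -abg !inE (negbTE xa) /= => /eqP <-.
exact: mem_head.
Qed.

Lemma path_cross_edge T S u (p : seq V) : path (adj T) u p -> uniq (u :: p) ->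
  u \in S -> last u p \notin S ->
  exists y z, [/\ y \in S, z \notin S, [set y; z] \in T,
    connect (adj (T :\ [set y; z])) u y & connect (adj (T :\ [set y; z])) z (last u p)].
Proof.
elim: p u => [|a p IHp] u /=; first by move=> _ _ ->.
move=> /andP[/andP[ua uaT] pth] /andP[uap up] uS lS.
have [aS | aS] := boolP (a \in S); last first.
  exists u, a; split => //.
  by apply/connectP; exists p => //; apply: path_setD pth uap (set21 u a).
have [y [z [yS zS yzT ay zl]]] := IHp a pth up aS lS.
exists y, z; split => //.
have [uaf | uaf] := eqVneq [set u; a] [set y; z].
  have /set2P[-> | uz] : u \in [set y; z] by rewrite -uaf set21.
    exact: connect0.
  by move: zS; rewrite -uz uS.
by apply: connect_trans ay; apply: connect1; rewrite /adj ua !inE uaf uaT.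
Qed.

Lemma connect_cross_edge T S u v : connect (adj T) u v -> u \in S -> v \notin S ->
  exists y z, [/\ y \in S, z \notin S, [set y; z] \in T,
    connect (adj (T :\ [set y; z])) u y & connect (adj (T :\ [set y; z])) z v].
Proof.
move=> /connectP[p pth ->] uS; case/shortenP: pth => q qpth uq _.
exact: path_cross_edge.
Qed.
Lemma crosses_pair S p q : p \in S -> q \notin S -> crosses S [set p; q].
Proof.
move=> pS qS; rewrite /crosses (_ : _ :&: S = [set p]) ?cards1 //.
apply/setP => x; rewrite !inE; have [-> | _] //= := eqVneq x p.
by case: eqP => // ->; rewrite (negbTE qS).
Qed.

Lemma crossesP S f : #|f| = 2 -> crosses S f ->
  exists p q, [/\ p \in S, q \notin S & f = [set p; q]].
Proof.
move=> f2 /cards1P[p fSp].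
have /setIP[pf pS] : p \in f :&: S by rewrite fSp set11.
have /cards1P[q fq] : #|f :\ p| == 1 by move: f2; rewrite (cardsD1 p f) pf add1n => -[->].
have /setD1P[qp qf] : q \in f :\ p by rewrite fq set11.
exists p, q; split => //.
  by apply: contra qp => qS; rewrite -in_set1 -fSp inE qf.
by rewrite -fq setD1K.
Qed.

Definition component T u := [set x | connect (adj T) u x].

Lemma spanning_tree_exists E : gconnected E -> exists T, spanning_tree E T.
Proof.
move=> cE; have sub_conn : (E \subset E) && gconnected E by rewrite subxx cE.
have [T /andP[sTE cT] minT] :=
  @arg_minnP _ E (fun T => (T \subset E) && gconnected T) (fun T => #|T|) sub_conn.
exists T; apply/and3P; split => //; apply/forall_inP => e eT; apply/negP => cTe.
have := minT (T :\ e); rewrite (subset_trans (subsetDl T _) sTE) cTe => /(_ isT).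
by rewrite (cardsD1 e T) eT ltnn.
Qed.

Lemma spanning_treeS E F T : E \subset F -> spanning_tree E T -> spanning_tree F T.
Proof.
by move=> sEF /and3P[sTE cT minT]; rewrite /spanning_tree (subset_trans sTE sEF) cT.
Qed.

Lemma spanning_tree_cut E T u v : spanning_tree E T -> [set u; v] \in T ->
  v \notin component (T :\ [set u; v]) u.
Proof.
case/and3P=> _ /gconnectedP cT /forall_inP minT uvT; rewrite inE.
apply: contraNN (minT _ uvT) => uv; apply: (gconnected_from (u := u)) => x.
by case/orP: (connect_setD_edge v (cT u x)) => // vx; apply: connect_trans vx.
Qed.

Lemma spanning_tree_exchange E T u v p q : spanning_tree E T ->
  p \in component (T :\ [set u; v]) u -> q \notin component (T :\ [set u; v]) u ->
  gconnected ([set p; q] |: (T :\ [set u; v])).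
Proof.
case/and3P=> _ /gconnectedP cT _; rewrite !inE => up uq.
have pq : p != q by apply: contraNneq uq => <-.
have sub := subsetU1 [set p; q] (T :\ [set u; v]).
have vq : connect (adj (T :\ [set u; v])) v q.
  by case/orP: (connect_setD_edge v (cT u q)) => // uq'; rewrite uq' in uq.
apply: gconnected_exchange; first exact/gconnectedP.
apply: connect_trans (connect_adjS sub up) _.
apply: connect_trans (connect1 (adj_setU1 _ pq)) _.
by rewrite connect_adj_sym; apply: connect_adjS sub vq.
Qed.

End Connectivity.

Section MinimumSpanningTree.
Variables (V : finType) (R : realType).
Implicit Types (E T C : {set {set V}}) (w : {set V} -> R) (e : {set V}) (t : R).

Lemma ler_sum_subset (A B : {set {set V}}) w : A \subset B ->
  {in B, forall e, 0 <= w e} -> \sum_(e in A) w e <= \sum_(e in B) w e.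
Proof.
move=> sAB w_ge0; rewrite [leRHS](big_setID A) /= (setIidPr sAB) lerDl.
by apply: sumr_ge0 => e /setDP[/w_ge0].
Qed.

Lemma ler_sum_setU1 (A : {set {set V}}) w e : 0 <= w e ->
  \sum_(f in e |: A) w f <= w e + \sum_(f in A) w f.
Proof.
move=> we_ge0; have [eA | eA] := boolP (e \in A); last by rewrite big_setU1.
by rewrite (setUidPr _) ?sub1set // lerDr.
Qed.

Lemma mst_le_tree E w T : spanning_tree E T -> mst E w <= \sum_(e in T) w e.
Proof. exact: bigmin_le_cond. Qed.

Lemma mst_le_gconnected E w C : {in E, forall e, 0 <= w e} ->
  C \subset E -> gconnected C -> mst E w <= \sum_(e in C) w e.
Proof.
move=> w_ge0 sCE /spanning_tree_exists[T sT].
apply: le_trans (mst_le_tree w (spanning_treeS sCE sT)) _.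
case/and3P: sT => sTC _ _; apply: ler_sum_subset sTC _ => e eC.
exact/w_ge0/(subsetP sCE).
Qed.

Lemma mst_attained E w : {in E, forall e, 0 <= w e} -> gconnected E ->
  exists2 T, spanning_tree E T & mst E w = \sum_(e in T) w e.
Proof.
move=> w_ge0 /spanning_tree_exists[T0 sT0].
rewrite /mst /rmin (bigmin_eq_arg _ _ _ _ sT0) => [|T /and3P[sTE _ _]].
  by case: (arg_minP _ sT0) => T sT _; exists T.
exact: ler_sum_subset.
Qed.

Lemma upd_ge0 E w e t : {in E, forall f, 0 <= w f} -> 0 <= t ->
  {in e |: E, forall f, 0 <= upd w e t f}.
Proof.
move=> w_ge0 t_ge0 f; rewrite /upd; case: eqVneq => // fe /setU1P[/eqP | /w_ge0] //.
by rewrite (negbTE fe).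
Qed.

Lemma sum_upd_notin (A : {set {set V}}) w e t : e \notin A ->
  \sum_(f in A) upd w e t f = \sum_(f in A) w f.
Proof. by move=> eA; apply: eq_bigr => f fA; rewrite /upd; case: eqVneq fA eA => // -> ->. Qed.

Lemma weights_in_ge0 B E w : weights_in B E w -> {in E, forall f, 0 <= w f}.
Proof. by move=> wE f /wE/andP[]. Qed.

Definition mst_drop E w e t := mst E w - mst (e |: E) (upd w e t).

Lemma mst_drop_ge0 E w e t : {in E, forall f, 0 <= w f} -> gconnected E ->
  e \notin E -> 0 <= mst_drop E w e t.
Proof.
move=> w_ge0 cE eE; rewrite /mst_drop; have [T sT ->] := mst_attained w_ge0 cE.
rewrite subr_ge0; apply: le_trans (mst_le_tree _ (spanning_treeS (subsetU1 e E) sT)) _.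
case/and3P: sT => sTE _ _; rewrite sum_upd_notin //.
by apply: contra eE; apply: (subsetP sTE).
Qed.

Lemma sum_upd_in (A : {set {set V}}) w e t : e \in A ->
  \sum_(f in A) upd w e t f = t + \sum_(f in A :\ e) w f.
Proof. by move=> eA; rewrite (big_setD1 _ eA) /= {1}/upd eqxx sum_upd_notin // setD11. Qed.

Lemma mst_drop_le_w1 B E w T u v t :
  is_graph E -> gconnected E -> weights_in B E w -> [set u; v] \notin E -> 0 <= t ->
  spanning_tree ([set u; v] |: E) T -> [set u; v] \in T ->
  mst ([set u; v] |: E) (upd w [set u; v] t) = \sum_(f in T) upd w [set u; v] t f ->
  mst_drop E w [set u; v] t <= w1 B E w (component (T :\ [set u; v]) u).
Proof.
set e := [set u; v]; set K := component _ u => gE cE wE eE t_ge0 sT eT mstT.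
have w_ge0 := weights_in_ge0 wE.
have sTE : T :\ e \subset E.
  apply/subsetP => f /setD1P[fe fT]; case/and3P: sT => /subsetP/(_ f fT) + _ _.
  by case/setU1P => // /eqP; rewrite (negbTE fe).
have drop_le p q : p \in K -> q \notin K -> [set p; q] \in E ->
    mst_drop E w e t <= w [set p; q].
  move=> pK qK pqE; have Ge : [set p; q] |: (T :\ e) \subset E by rewrite subUset sub1set pqE.
  have mstE := mst_le_gconnected w_ge0 Ge (spanning_tree_exchange sT pK qK).
  rewrite /mst_drop mstT sum_upd_in // lerBlDr.
  apply: le_trans (le_trans mstE (ler_sum_setU1 _ (w_ge0 _ pqE))) _.
  by rewrite lerD2l lerDr.
have uK : u \in K by rewrite inE connect0.
have [p [q [pK qK pqE _ _]]] :=
  connect_cross_edge (gconnectedP _ cE u v) uK (spanning_tree_cut sT eT).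
apply: le_bigmin => [|f /andP[fE fK]].
  by apply: le_trans (drop_le p q pK qK pqE) _; case/andP: (wE _ pqE).
have [x [y [xK yK fxy]]] := crossesP (eqP (forall_inP gE f fE)) fK.
by rewrite fxy in fE *; apply: drop_le.
Qed.

Lemma mst_drop_le_max_w1 B E w e t :
  is_graph E -> gconnected E -> weights_in B E w -> #|e| = 2 -> e \notin E -> 0 <= t ->
  mst_drop E w e t <= max_w1 B E w.
Proof.
move=> gE cE wE /eqP/cards2P[u [v [uv ->]]] eE t_ge0.
have w_ge0 := weights_in_ge0 wE.
have cE' := gconnectedS (subsetU1 [set u; v] E) cE.
have [T sT mstT] := mst_attained (upd_ge0 (e := [set u; v]) w_ge0 t_ge0) cE'.
have [eT | eT] := boolP ([set u; v] \in T).
  apply: le_trans (mst_drop_le_w1 gE cE wE eE t_ge0 sT eT mstT) _.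
  apply: le_bigmax_cond; apply/existsP; exists u; rewrite inE connect0 /=.
  by apply/existsP; exists v; rewrite inE (spanning_tree_cut sT eT).
apply: le_trans (bigmax_ge_id _ _ _ _); rewrite /mst_drop subr_le0 mstT.
rewrite sum_upd_notin //; apply: mst_le_tree.
case/and3P: sT => sTE cT minT; apply/and3P; split => //.
apply/subsetP => f fT; case/setU1P: (subsetP sTE f fT) => // fe.
by rewrite -fe fT in eT.
Qed.

Lemma w1_le_mst_drop B E w S : gconnected E -> weights_in B E w -> cut_has_nonedge E S ->
  exists e, [/\ #|e| = 2, e \notin E & w1 B E w S <= mst_drop E w e 0].
Proof.
move=> cE wE /existsP[u /andP[uS /existsP[v /andP[vS uvE]]]]; rewrite inE in vS.
have uv : u != v by apply: contraNneq vS => <-.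
have w_ge0 := weights_in_ge0 wE.
exists [set u; v]; split => //; first by rewrite cards2 uv.
have [T sT mstT] := mst_attained w_ge0 cE.
have /gconnectedP cT : gconnected T by case/and3P: sT.
have [y [z [yS zS fT uy zv]]] := connect_cross_edge (cT u v) uS vS.
have sTE : T \subset E by case/and3P: sT.
set G := [set u; v] |: (T :\ [set y; z]).
have GE : G \subset [set u; v] |: E by apply/setUS/subset_trans/sTE/subsetDl.
have cG : gconnected G.
  apply: gconnected_exchange; first exact/gconnectedP.
  have sub := subsetU1 [set u; v] (T :\ [set y; z]).
  rewrite connect_adj_sym in uy; rewrite connect_adj_sym in zv.
  apply: connect_trans (connect_adjS sub uy) _.
  exact: connect_trans (connect1 (adj_setU1 _ uv)) (connect_adjS sub zv).
have mstG := mst_le_gconnected (upd_ge0 (e := [set u; v]) w_ge0 (lexx 0)) GE cG.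
have upd_new : upd w [set u; v] 0 [set u; v] = 0 by rewrite /upd eqxx.
have mst_new :
    mst ([set u; v] |: E) (upd w [set u; v] 0) <= \sum_(f in T :\ [set y; z]) w f.
  have upd_new_ge0 : 0 <= upd w [set u; v] 0 [set u; v] by rewrite upd_new.
  apply: le_trans mstG (le_trans (ler_sum_setU1 _ upd_new_ge0) _).
  rewrite upd_new add0r sum_upd_notin //.
  by apply: contra uvE => /setD1P[_ /(subsetP sTE)].
have w1_le : w1 B E w S <= w [set y; z].
  by apply: bigmin_le_cond; rewrite (subsetP sTE _ fT) crosses_pair.
rewrite /mst_drop mstT (big_setD1 _ fT) /= lerBrDr.
exact: lerD.
Qed.

Lemma w1_ge0 B E w S : 0 <= B -> weights_in B E w -> 0 <= w1 B E w S.
Proof. by move=> B_ge0 wE; apply: le_bigmin => // f /andP[/wE/andP[]]. Qed.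

Lemma max_w1_le B E w : 0 <= B -> max_w1 B E w <= B.
Proof. by move=> B_ge0; apply: bigmax_le => // S _; apply: bigmin_le_id. Qed.

End MinimumSpanningTree.

Lemma sup_eq_max (R : realType) (D : set R) m :
  (forall d, D d -> d <= m) -> (exists2 d, D d & m <= d) -> sup D = m.
Proof.
move=> ub [d Dd md]; apply/le_anti/andP; split; first by apply: ge_sup => //; exists d.
by apply: le_trans md (ub_le_sup _ Dd); exists m.
Qed.

Section Sensitivity.
Variables (V : finType) (R : realType).
Implicit Types (B : R) (E : {set {set V}}) (w : {set V} -> R) (a b c : V).

Definition star c : {set {set V}} := [set [set c; x] | x in [set~ c]].

Lemma star_graph c : is_graph (star c).
Proof.
by apply/forall_inP => f /imsetP[x]; rewrite !inE eq_sym => cx ->; rewrite cards2 cx.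
Qed.

Lemma star_gconnected c : gconnected (star c).
Proof.
apply: (gconnected_from (u := c)) => x; have [<- // | cx] := eqVneq c x.
by apply: connect1; rewrite /adj cx; apply/imsetP; exists x; rewrite // !inE eq_sym.
Qed.

Lemma set2_notin_star a b c : c != a -> c != b -> [set a; b] \notin star c.
Proof.
move=> ca cb; apply/imsetP => -[x _ abx].
have : c \in [set a; b] by rewrite abx set21.
by rewrite !inE (negbTE ca) (negbTE cb).
Qed.

Lemma three_distinct : (3 <= #|V|)%N -> exists a b c, [/\ a != b, c != a & c != b].
Proof.
move=> V3; have /card_gt0P[a _] : (0 < #|V|)%N by apply: leq_trans V3.
have /card_gt0P[b] : (0 < #|[set~ a]|)%N by rewrite cardsC1 -ltnS prednK ?(leq_trans _ V3).
rewrite !inE => ba.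
have /card_gt0P[c] : (0 < #|~: [set a; b]|)%N.
  by move: V3; rewrite -(cardsC [set a; b]) cards2 eq_sym ba -{1}[2%N]addn0 ltn_add2l.
by rewrite !inE negb_or => /andP[ca cb]; exists a, b, c; rewrite eq_sym.
Qed.

Lemma GS_eq B : 0 <= B -> (3 <= #|V|)%N -> GS V B = B.
Proof.
move=> B_ge0 V3; apply: sup_eq_max.
  move=> _ [E [w [e [t [[gE cE wE] [[e2 eE /andP[t_ge0 _] _] ->]]]]]].
  have w_ge0 := weights_in_ge0 wE.
  rewrite -/(mst_drop E w e t) ger0_norm ?mst_drop_ge0 //.
  exact: le_trans (mst_drop_le_max_w1 gE cE wE e2 eE t_ge0) (max_w1_le _ _ B_ge0).
have [a [b [c [ab ca cb]]]] := three_distinct V3.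
pose w0 : {set V} -> R := fun=> B.
have w0B : weights_in B (star c) w0 by move=> f _; rewrite /w0 lexx B_ge0.
have cut_a : cut_has_nonedge (star c) [set a].
  apply/existsP; exists a; rewrite set11; apply/existsP; exists b.
  by rewrite !inE eq_sym ab set2_notin_star.
have [e [e2 eE w1_le]] := w1_le_mst_drop (star_gconnected c) w0B cut_a.
exists `|mst_drop (star c) w0 e 0|.
  have cE := star_gconnected c.
  exists (star c), w0, e, 0; split; first by split; first exact: star_graph.
  split=> //; split; rewrite ?lexx //; exact: gconnectedS (subsetU1 e _) cE.
apply: le_trans (ler_norm _); apply: le_trans w1_le.
by apply: le_bigmin => // f _; rewrite /w0.
Qed.

Lemma RS_eq B E w : 0 <= B -> is_graph E -> gconnected E -> weights_in B E w ->
  RS B E w = max_w1 B E w.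
Proof.
move=> B_ge0 gE cE wE; have w_ge0 := weights_in_ge0 wE.
have [/existsP[S0 cutS0] | no_cut] := boolP [exists S, cut_has_nonedge E S].
  apply: sup_eq_max.
    move=> _ [e [t [[e2 eE /andP[t_ge0 _]] ->]]].
    rewrite -/(mst_drop E w e t) ger0_norm ?mst_drop_ge0 //.
    exact: mst_drop_le_max_w1.
  rewrite /max_w1 /rmax (bigmax_eq_arg _ _ _ _ cutS0) => [|S _]; last exact: w1_ge0.
  case: arg_maxP => // S cutS _; have [e [e2 eE w1_le]] := w1_le_mst_drop cE wE cutS.
  exists `|mst_drop E w e 0|; last exact: le_trans w1_le (ler_norm _).
  by exists e, 0; split; rewrite ?lexx.
rewrite /max_w1 big_pred0 => [|S]; last first.
  by apply/negbTE; apply: contraNN no_cut => cutS; apply/existsP; exists S.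
apply: sup_out => -[[_ [e [t [[/eqP/cards2P[u [v [uv ->]]] uvE _] _]]]] _].
case/negP: no_cut; apply/existsP; exists [set u]; apply/existsP; exists u.
by rewrite set11; apply/existsP; exists v; rewrite !inE eq_sym uv.
Qed.

End Sensitivity.

Theorem mainTheorem6 (R : realType) (V : finType) (B : R)
  (E : {set {set V}}) (w : {set V} -> R) :
  (3 <= #|V|)%N ->
  is_graph E -> gconnected E -> weights_in B E w ->
  RS B E w / GS V B = max_w1 B E w / B.
Proof.
move=> V3 gE cE wE.
have [a [b [_ [ab _ _]]]] := three_distinct V3.
have b_out : b \notin [set a] by rewrite inE eq_sym.
have [y [z [_ _ yzE _ _]]] := connect_cross_edge (gconnectedP _ cE a b) (set11 a) b_out.
have B_ge0 : 0 <= B by case/andP: (wE _ yzE) => /le_trans; apply.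
by rewrite GS_eq // RS_eq.
Qed.
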